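(* Let $X$ be a random variable with values in a finite set, $\delta\ge0$, $k$ real, and suppose $\mathrm{H}^{\delta}_\infty(X)<k$. Then for every random variable $Y$ (on the same set) with $\mathrm{H}_\infty(Y)\ge k$, $$\Big(\sum_x|P_X(x)-P_Y(x)|^2\Big)^{1/2}>2^{-k/2}\delta.$$
   Context: $P_X(x)=\Pr[X=x]$. Min-entropy: $\mathrm{H}_\infty(Y)=-\log_2\max_y P_Y(y)$. Statistical distance: $d_1(X;Y)=\frac12\sum_z|P_X(z)-P_Y(z)|$. Smooth min-entropy: $\mathrm{H}^{\delta}_\infty(X)=\max\{\mathrm{H}_\infty(Y): Y \text{ finitely supported},\ d_1(X;Y)\le\delta\}$. *)

From HB Require Import structures.
From mathcomp Require Import all_boot all_order all_algebra.
From mathcomp Require Import all_classical all_reals all_analysis.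
Set Implicit Arguments. Unset Strict Implicit. Unset Printing Implicit Defensive.
Import Order.TTheory GRing.Theory Num.Theory.
Local Open Scope ring_scope.
Local Open Scope classical_set_scope.

(* A random variable with values in the finite set T is represented by its
   distribution P : {ffun T -> R}, P x = Pr[X = x]. *)
Definition is_dist {R : realType} {T : finType} (P : {ffun T -> R}) : Prop :=
  (forall x, 0 <= P x) /\ \sum_(x : T) P x = 1.

Definition log2 {R : realType} (x : R) : R := ln x / ln 2.

Definition pmax {R : realType} {T : finType} (P : {ffun T -> R}) : R :=
  \big[Num.max/0]_(x : T) P x.

Definition Hmin {R : realType} {T : finType} (P : {ffun T -> R}) : R :=
  - log2 (pmax P).

Definition d1 {R : realType} {T : finType} (P Q : {ffun T -> R}) : R :=
  2^-1 * \sum_(z : T) `|P z - Q z|.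

(* Smooth min-entropy: max (here: sup, which is attained) of H_oo(Y) over
   distributions Y on T with d_1(X;Y) <= delta. *)
Definition Hsmooth {R : realType} {T : finType} (delta : R) (P : {ffun T -> R}) : R :=
  sup [set Hmin Q | Q in [set Q : {ffun T -> R} | is_dist Q /\ d1 P Q <= delta]].

(* Put c = 2^-k.  Cutting P_X down to c and spreading the removed mass E over
   the points below c, in proportion to their room c - P_X(x), gives a
   distribution Q with max Q <= c, i.e. H_oo(Q) >= k, at statistical distance
   at most E from P_X; since H^delta_oo(X) < k this forces E > delta.  On the
   other hand H_oo(Y) >= k means P_Y <= c everywhere, so the points where P_X
   exceeds c contribute at least c E^2 to the squared L2 distance:
   Cauchy-Schwarz over these at most 1/c points. *)
From HB Require Import structures.
From mathcomp Require Import all_boot all_order all_algebra.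
From mathcomp Require Import all_classical all_reals all_analysis.
From mathcomp Require Import ring lra.
Import Order.TTheory GRing.Theory Num.Theory.
Local Open Scope ring_scope.

Section MaxProbability.
Context {R : realType} {T : finType}.
Implicit Types (Q : {ffun T -> R}).

Lemma le_pmax Q x : Q x <= pmax Q.
Proof. exact: le_bigmax. Qed.

Lemma pmax_le Q c : 0 <= c -> (forall x, Q x <= c) -> pmax Q <= c.
Proof. by move=> c_ge0 Q_le; apply: bigmax_le. Qed.

Lemma dist_card_pmax {Q} : is_dist Q -> 1 <= #|T|%:R * pmax Q.
Proof.
move=> [_ Q_sum1]; rewrite mulr_natl -sumr_const -{1}Q_sum1.
by apply: ler_sum => x _; apply: le_pmax.
Qed.

Lemma pmax_gt0 {Q} : is_dist Q -> 0 < pmax Q.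
Proof.
move=> Q_dist; have := dist_card_pmax Q_dist.
rewrite ltNge; apply: contraTN => pmax_le0.
by rewrite -ltNge (le_lt_trans (mulr_ge0_le0 _ pmax_le0)) ?ltr01.
Qed.

End MaxProbability.

Section MinEntropy.
Context {R : realType} {T : finType}.
Implicit Types (P Q : {ffun T -> R}).

Lemma ln2_gt0 : 0 < ln (2 : R).
Proof. by rewrite ln_gt0 // ltr1n. Qed.

Lemma le_Hmin Q k : is_dist Q -> (k <= Hmin Q) = (pmax Q <= 2 `^ (- k)).
Proof.
move=> Q_dist; rewrite -[pmax Q <= _]ler_ln ?posrE ?powR_gt0 ?pmax_gt0 //.
by rewrite ln_powR /Hmin /log2 lerNr ler_pdivrMr ?ln2_gt0.
Qed.

Lemma Hmin_le_log2_card Q : is_dist Q -> Hmin Q <= log2 (#|T|%:R : R).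
Proof.
move=> Q_dist; have pmax_pos := pmax_gt0 Q_dist.
have card_pos : 0 < #|T|%:R :> R.
  rewrite -(pmulr_lgt0 _ pmax_pos).
  exact: lt_le_trans ltr01 (dist_card_pmax Q_dist).
rewrite /Hmin /log2 -mulNr ler_wpM2r ?invr_ge0 ?(ltW ln2_gt0) //.
rewrite -lnV ?posrE // ler_ln ?posrE ?invr_gt0 //.
by rewrite -[_^-1]mul1r ler_pdivrMr // dist_card_pmax.
Qed.

Lemma Hmin_le_Hsmooth {P Q} {delta : R} :
  is_dist Q -> d1 P Q <= delta -> Hmin Q <= Hsmooth delta P.
Proof.
move=> Q_dist PQ_le; apply: ub_le_sup; last by exists Q.
exists (log2 (#|T|%:R : R)) => _ [Q' [Q'_dist _] <-].
exact: Hmin_le_log2_card.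
Qed.

End MinEntropy.

Definition excess {R : realType} {T : finType} (P : {ffun T -> R}) (c : R)
  : R :=
  \sum_x (P x - Num.min (P x) c).

Section Capping.
Context {R : realType} {T : finType} (P : {ffun T -> R}) (c : R).
Hypotheses (P_dist : is_dist P) (c_gt0 : 0 < c) (card_c : 1 <= #|T|%:R * c).

Let clip x := Num.min (P x) c.
Let deficit := \sum_x (c - clip x).
(* If the deficit is 0 then so is the excess, and [x / 0 = 0] makes the
   weight harmless. *)
Let weight := excess P c / deficit.

Definition capped : {ffun T -> R} := [ffun x => clip x + weight * (c - clip x)].

Lemma clip_ge0 x : 0 <= clip x.
Proof. by rewrite le_min P_dist.1 ltW. Qed.

Lemma clip_le x : clip x <= c.
Proof. by rewrite ge_min lexx orbT. Qed.

Lemma clip_le_dist x : clip x <= P x.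
Proof. by rewrite ge_min lexx. Qed.

Lemma excess_ge0 : 0 <= excess P c.
Proof. by apply: sumr_ge0 => x _; rewrite subr_ge0 clip_le_dist. Qed.

Lemma sum_clip : \sum_x clip x = 1 - excess P c.
Proof. by rewrite /excess sumrB P_dist.2 opprB addrC subrK. Qed.

Lemma excess_le_deficit : excess P c <= deficit.
Proof.
rewrite /deficit sumrB sum_clip sumr_const -mulr_natl.
by rewrite lerBrDr addrCA subrr addr0.
Qed.

Lemma weight_mul_deficit : weight * deficit = excess P c.
Proof.
have [deficit0 | deficit_neq0] := eqVneq deficit 0; last by rewrite divfK.
rewrite deficit0 mulr0; apply/esym/le_anti.
by rewrite excess_ge0 andbT -deficit0 excess_le_deficit.
Qed.

Lemma weight_ge0 : 0 <= weight.
Proof.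
by rewrite divr_ge0 ?excess_ge0 // sumr_ge0 // => x _; rewrite subr_ge0 clip_le.
Qed.

Lemma weight_le1 : weight <= 1.
Proof.
have [deficit0 | deficit_neq0] := eqVneq deficit 0.
  by rewrite /weight deficit0 invr0 mulr0 ler01.
have deficit_gt0 : 0 < deficit.
  by rewrite lt_def deficit_neq0 (le_trans excess_ge0 excess_le_deficit).
by rewrite ler_pdivrMr // mul1r excess_le_deficit.
Qed.

Lemma weight_room_ge0 x : 0 <= weight * (c - clip x).
Proof. by rewrite mulr_ge0 ?weight_ge0 // subr_ge0 clip_le. Qed.

Lemma capped_dist : is_dist capped.
Proof.
split=> [x|].
  by rewrite ffunE addr_ge0 ?clip_ge0 ?weight_room_ge0.
under eq_bigr do rewrite ffunE.
by rewrite big_split /= sum_clip -mulr_sumr weight_mul_deficit subrK.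
Qed.

Lemma pmax_capped : pmax capped <= c.
Proof.
apply: pmax_le => [|x]; first exact: ltW.
by rewrite ffunE -lerBrDl ler_piMl ?subr_ge0 ?clip_le ?weight_ge0 ?weight_le1.
Qed.

Lemma d1_capped : d1 P capped <= excess P c.
Proof.
have : \sum_x `|P x - capped x|
    <= \sum_x ((P x - clip x) + weight * (c - clip x)).
  apply: ler_sum => x _; rewrite ffunE opprD addrA.
  apply: le_trans (ler_normB _ _) _.
  by rewrite !ger0_norm ?weight_room_ge0 // subr_ge0 clip_le_dist.
rewrite big_split /= -mulr_sumr weight_mul_deficit -/(excess P c) /d1; lra.
Qed.

End Capping.

Arguments capped_dist {R T P c}.
Arguments pmax_capped {R T P c}.
Arguments d1_capped {R T P c}.

(* [(p - c)^2 >= 2 t (p - c) - t^2], with [t^2] inflated by the factor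
   [p / c >= 1] so that summing over x costs only [t^2 / c]. *)
Lemma sqr_subr_ge_excess {R : realFieldType} (t : R) {p q c : R} :
  0 < c -> 0 <= p -> q <= c ->
  2 * t * (p - Num.min p c) - t ^+ 2 / c * p <= (p - q) ^+ 2.
Proof.
move=> c_gt0 p_ge0 q_le; have [p_le | c_lt] := leP p c.
  rewrite subrr mulr0 sub0r; apply: le_trans (sqr_ge0 _).
  by rewrite oppr_le0 mulr_ge0 // divr_ge0 ?sqr_ge0 ?ltW.
have t2_le : t ^+ 2 <= t ^+ 2 / c * p.
  by rewrite -mulrA ler_peMr ?sqr_ge0 // mulrC ler_pdivlMr // mul1r ltW.
have := sqr_ge0 (p - c - t); nra.
Qed.

Lemma sum_sqr_dist_ge_excess {R : realType} {T : finType}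
    {P Q : {ffun T -> R}} {c : R} :
  is_dist P -> 0 < c -> (forall x, Q x <= c) ->
  c * excess P c ^+ 2 <= \sum_x `|P x - Q x| ^+ 2.
Proof.
move=> P_dist c_gt0 Q_le; set t := c * excess P c.
rewrite (eq_bigr (fun x => (P x - Q x) ^+ 2)) => [|x _]; last first.
  by rewrite real_normK ?num_real.
apply: le_trans (ler_sum _ (fun x _ =>
  sqr_subr_ge_excess t c_gt0 (P_dist.1 x) (Q_le x))).
rewrite sumrB -!mulr_sumr P_dist.2 mulr1 -/(excess P c).
suff -> : 2 * t * excess P c - t ^+ 2 / c = c * excess P c ^+ 2 by [].
by rewrite /t; field; rewrite gt_eqF.
Qed.

Theorem corollary4 (R : realType) (T : finType) (PX : {ffun T -> R})
  (delta k : R) :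
  is_dist PX -> 0 <= delta -> Hsmooth delta PX < k ->
  forall PY : {ffun T -> R}, is_dist PY -> k <= Hmin PY ->
    Num.sqrt (\sum_(x : T) `|PX x - PY x| ^+ 2) > 2 `^ (- k / 2) * delta.
Proof.
move=> PX_dist delta_ge0 Hsmooth_lt PY PY_dist k_le.
set c := 2 `^ (- k); have c_gt0 : 0 < c by rewrite powR_gt0.
have PY_le : pmax PY <= c by rewrite -le_Hmin.
have card_c : 1 <= #|T|%:R * c.
  by apply: le_trans (dist_card_pmax PY_dist) _; rewrite ler_wpM2l.
have delta_lt : delta < excess PX c.
  have Q_dist := capped_dist PX_dist c_gt0 card_c.
  rewrite ltNge; apply/negP => excess_le.
  have := Hmin_le_Hsmooth Q_dist
    (le_trans (d1_capped PX_dist card_c) excess_le).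
  have := pmax_capped PX_dist c_gt0 card_c; rewrite -le_Hmin //.
  lra.
have sum_ge := sum_sqr_dist_ge_excess PX_dist c_gt0
  (fun x => le_trans (le_pmax PY x) PY_le).
have -> : 2 `^ (- k / 2) = Num.sqrt c by rewrite powRrM powR12_sqrt ?powR_ge0.
apply: lt_le_trans (ler_wsqrtr sum_ge).
rewrite sqrtrM ?(ltW c_gt0) // sqrtr_sqr ger0_norm ?excess_ge0 //.
by rewrite ltr_pM2l ?sqrtr_gt0.
Qed.
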